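(* Let $(Y,U)$ be discrete random variables with $Y$ taking values in a finite set $\mathcal{Y}$, let $\mu\in(0,\frac12)$ and $\epsilon>0$. If $$\Pr\left(|h(Y|U)-c|>\epsilon\right)<\mu$$ for some $c>0$, then $$|\mathbb{H}(Y|U)-c|<\epsilon+\mu\log_2\frac{|\mathcal{Y}|}{\mu^2}.$$
   Context: $h(Y|U)$ denotes the random variable $-\log_2 p_{Y|U}(Y|U)$; $\mathbb{H}(Y|U)$ is the conditional entropy. *)

From HB Require Import structures.
From mathcomp Require Import all_boot all_order all_algebra.
From mathcomp Require Import all_classical all_reals all_analysis.
Set Implicit Arguments. Unset Strict Implicit. Unset Printing Implicit Defensive.
Import Order.TTheory GRing.Theory Num.Theory.
Local Open Scope ring_scope.
Local Open Scope classical_set_scope.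

Definition log2 {R : realType} (x : R) : R := ln x / ln 2.

(* A pair of discrete random variables (Y,U), Y in a finite set Y, U in a
   countable set U, given by its joint probability mass function p y u. *)
Definition is_joint_pmf {R : realType} {Y : finType} {U : countType}
  (p : Y -> U -> R) : Prop :=
  (forall y u, 0 <= p y u) /\
  (\esum_(x in [set: Y * U]) (p x.1 x.2)%:E = 1)%E.

Definition marg {R : realType} {Y : finType} {U : countType}
  (p : Y -> U -> R) (u : U) : R := \sum_(y : Y) p y u.

(* h(Y|U) evaluated at outcome (y,u): -log2 p_{Y|U}(y|u) *)
Definition hcond {R : realType} {Y : finType} {U : countType}
  (p : Y -> U -> R) (y : Y) (u : U) : R := - log2 (p y u / marg p u).

Definition supp {R : realType} {Y : finType} {U : countType}
  (p : Y -> U -> R) : set (Y * U) := [set x | 0 < p x.1 x.2].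

Definition prob {R : realType} {Y : finType} {U : countType}
  (p : Y -> U -> R) (E : set (Y * U)) : \bar R :=
  \esum_(x in E) (p x.1 x.2)%:E.

Definition condH {R : realType} {Y : finType} {U : countType}
  (p : Y -> U -> R) : \bar R :=
  \esum_(x in supp p) (p x.1 x.2 * hcond p x.1 x.2)%:E.

From HB Require Import structures.
From mathcomp Require Import all_boot all_order all_algebra.
From mathcomp Require Import all_classical all_reals all_analysis.
From mathcomp Require Import ring lra.

Set Implicit Arguments.
Unset Strict Implicit.
Unset Printing Implicit Defensive.
Import Order.TTheory GRing.Theory Num.Theory.
Local Open Scope ring_scope.
Local Open Scope classical_set_scope.

(* Split the support into the atypical set B, where |h(Y|U) - c| > eps, and
   its complement G, on which the information density lies within eps of c, so
   that G contributes (c +- eps) P(G) to H(Y|U).  The remaining error terms are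
   controlled by a single inequality: ln z <= z - 1 at z = p_U(u) / (a p(y,u)),
   summed over a set A of outcomes, gives, because the U-marginal has total
   mass |Y| on Y x U,
       ln 2 * H_A + P(A) <= P(A) ln a + |Y| / a        (a >= 1)
   for the contribution H_A of A to H(Y|U).  Taking a = |Y| / mu bounds H_B by
   mu log2(|Y| / mu^2); taking a = 2|Y| on G, where P(G) >= 1/2, shows
   c - eps <= 1 + log2 |Y| <= log2(|Y| / mu^2), which bounds the mass
   (c - eps) P(B) that the typical part misses. *)

Section RealBounds.
Variable R : realType.
Implicit Types z q w a n mu h t c eps K : R.

Lemma ln_le_subr1 z : 0 < z -> ln z <= z - 1.
Proof.
by move=> z0; have := @le_ln1Dx R (z - 1); rewrite addrCA subrr addr0; apply; lra.
Qed.

Lemma mul_ln_div_le q w a : 0 < q -> 0 < w -> 0 < a ->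
  q * ln (w / q) + q <= q * ln a + w / a.
Proof.
move=> q0 w0 a0; have := ln_le_subr1 (divr_gt0 w0 (mulr_gt0 q0 a0)).
rewrite !ln_div ?lnM ?posrE ?mulr_gt0 // => /(ler_wpM2l (ltW q0)).
have -> : q * (w / (q * a) - 1) = w / a - q by field; lra.
lra.
Qed.

Lemma ln2_ge_half : 1 / 2 <= ln (2 : R).
Proof.
have := @ln_le_subr1 (1 / 2) ltac:(lra).
by rewrite ln_div ?posrE // ln1; lra.
Qed.

Lemma ln2_gt0 : 0 < ln (2 : R).
Proof. by rewrite ln_gt0 //; lra. Qed.

Lemma log2_div_sqr_gt n mu : 1 <= n -> 0 < mu -> mu < 1 / 2 ->
  1 + log2 n < log2 (n / mu ^+ 2).
Proof.
move=> n1 mu0 mu12; have n0 : 0 < n by lra.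
have ln2n : ln (2 * n) = ln 2 + ln n by rewrite lnM ?posrE //; lra.
have -> : 1 + log2 n = log2 (2 * n).
  by rewrite /log2 ln2n; field; rewrite gt_eqF ?ln2_gt0.
rewrite /log2 ltr_pM2r ?invr_gt0 ?ln2_gt0 //.
rewrite ltr_ln ?posrE ?divr_gt0 ?exprn_gt0 //; last lra.
rewrite ltr_pdivlMr ?exprn_gt0 // expr2.
have : mu * mu < 1 / 4 by nra.
nra.
Qed.

Lemma atypical_entropy_lt n mu q h : 1 <= n -> 0 < mu -> mu < 1 / 2 ->
  0 <= q -> q < mu -> ln 2 * h + q <= ln (n / mu) * q + n / (n / mu) ->
  h < mu * log2 (n / mu ^+ 2).
Proof.
move=> n1 mu0 mu12 q0 qmu; have n0 : 0 < n by lra.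
have l2 := ln2_ge_half.
have lmu : ln mu < - ln 2.
  by rewrite -lnV ?posrE // ltr_ln ?posrE ?invr_gt0 //; lra.
have lnn_ge0 : 0 <= ln n by rewrite ln_ge0.
rewrite ln_div ?posrE // divKf ?gt_eqF // => hb.
rewrite /log2 ln_div ?posrE ?exprn_gt0 // lnXn // mulrA ltr_pdivlMr ?ln2_gt0 //.
(* the coefficient ln (n / mu) - 1 of q in hb may have either sign *)
by have [] := lerP 1 (ln n - ln mu); nra.
Qed.

Lemma threshold_le_log2 n q h t : 1 <= n -> 1 / 2 <= q -> t * q <= h ->
  ln 2 * h + q <= ln (2 * n) * q + n / (2 * n) -> t <= 1 + log2 n.
Proof.
move=> n1 q12 tqh; have n0 : 0 < n by lra.
have l2 := ln2_gt0.
have -> : n / (2 * n) = 1 / 2 by field; rewrite gt_eqF.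
have -> : ln (2 * n) = ln 2 + ln n by rewrite lnM ?posrE //; lra.
move=> hb; have : t * ln 2 * q <= (ln 2 + ln n) * q by nra.
rewrite ler_pM2r; last lra.
have -> : 1 + log2 n = (ln 2 + ln n) / ln 2 by rewrite /log2; field; rewrite gt_eqF.
by rewrite ler_pdivlMr.
Qed.

Lemma abs_split_sub_lt hB hG qB qG c eps mu K :
  0 < c -> 0 < eps -> 0 <= hB -> hB < mu * K -> 0 <= hG -> 0 <= qB -> qB < mu ->
  qB + qG = 1 -> hG <= (c + eps) * qG ->
  (eps <= c -> (c - eps) * qG <= hG /\ c - eps <= K) ->
  `|hB + hG - c| < eps + mu * K.
Proof.
move=> c0 eps0 hB0 hBK hG0 qB0 qBmu qBG hGup hGlow.
have qG1 : qG <= 1 by lra.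
have K0 : 0 < K by rewrite -(pmulr_rgt0 _ (le_lt_trans qB0 qBmu)); lra.
rewrite ltr_norml; apply/andP; split.
  have [ce|ec] := lerP eps c; last lra.
  have [hGge cK] := hGlow ce.
  have : (c - eps) * qB <= K * qB by rewrite ler_wpM2r // subr_ge0.
  nra.
have : (c + eps) * qG <= c + eps by rewrite ler_piMr // addr_ge0 ?ltW.
lra.
Qed.
End RealBounds.

Section EsumFacts.
Local Open Scope ereal_scope.
Variable R : realType.

Lemma esumZl (T : choiceType) (I : set T) (a : T -> \bar R) (k : R) :
  (0 <= k)%R -> (forall i, I i -> 0 <= a i) ->
  \esum_(i in I) (k%:E * a i) = k%:E * \esum_(i in I) a i.
Proof.
move=> k0 a0; rewrite /esum -ereal_supZl //; last first.
  by apply/set0P; exists 0, set0; [exact: fsets_set0|rewrite fsbig_set0].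
rewrite image_comp; congr ereal_sup; apply: eq_imagel => X [finX XI] /=.
rewrite !fsbig_finite //= !big_seq ge0_sume_distrr // => i.
by rewrite in_fset_set // inE => /XI /a0.
Qed.

Lemma le_esum_subset (T : choiceType) (I J : set T) (a : T -> \bar R) :
  I `<=` J -> (forall i, J i -> 0 <= a i) ->
  \esum_(i in I) a i <= \esum_(i in J) a i.
Proof.
move=> IJ a0; rewrite (esumID I J) // (setIidr IJ) leeDl //.
by apply: esum_ge0 => i [] /a0.
Qed.

Lemma esum_prod_fin (Y : finType) (U : choiceType) (f : Y * U -> \bar R) :
  (forall x, 0 <= f x) ->
  \esum_(x in [set: Y * U]) f x = \sum_(y : Y) \esum_(u in [set: U]) f (y, u).
Proof.
move=> f0; have -> : [set: Y * U] = [set: Y] `*`` (fun _ => [set: U]).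
  by apply/seteqP; split => -[].
rewrite (eq_esum (b := fun k => f (k.1, k.2))); last by move=> -[].
rewrite -(esum_esum (a := fun y u => f (y, u))) //.
rewrite esum_fset //.
- have -> : [set: Y] = [set` predT] by apply/seteqP.
  rewrite -(@bigfs _ _ _ _ _ predT _ (index_enum_uniq Y)) // => y _.
  by rewrite mem_index_enum.
- exact: finite_finset.
- by move=> y _; apply: esum_ge0.
Qed.

End EsumFacts.

Section JointPmf.
Local Open Scope ereal_scope.
Variables (R : realType) (Y : finType) (U : countType) (p : Y -> U -> R).
Implicit Types A T : set (Y * U).
Hypothesis pmf : is_joint_pmf p.

Definition condH_on (A : set (Y * U)) : \bar R :=
  \esum_(x in A) (p x.1 x.2 * hcond p x.1 x.2)%:E.

Let p_ge0 y u : (0 <= p y u)%R. Proof. by case: pmf. Qed.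

Let marg_ge0 u : (0 <= marg p u)%R. Proof. exact: sumr_ge0. Qed.

Lemma pmf_le_marg y u : (p y u <= marg p u)%R.
Proof. by rewrite /marg (bigD1 y) //= lerDl sumr_ge0. Qed.

Lemma hcondE y u : (0 < p y u)%R ->
  hcond p y u = (ln (marg p u / p y u) / ln 2)%R.
Proof.
move=> pyu; have w0 := lt_le_trans pyu (pmf_le_marg y u).
by rewrite /hcond /log2 -mulNr -lnV ?posrE ?divr_gt0 // invf_div.
Qed.

Lemma hcond_ge0 x : supp p x -> (0 <= hcond p x.1 x.2)%R.
Proof.
move=> px; rewrite hcondE // divr_ge0 // ln_ge0 //; last lra.
by rewrite ler_pdivlMr // mul1r pmf_le_marg.
Qed.

Lemma esum_marg : \esum_(x in [set: Y * U]) (marg p x.2)%:E = (#|Y|%:R)%:E.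
Proof.
rewrite esum_prod_fin //=; last by move=> x; rewrite lee_fin marg_ge0.
have -> : \esum_(u in [set: U]) (marg p u)%:E = 1.
  case: pmf => _ <-.
  rewrite (@esum_prod_fin _ _ _ (fun x => (p x.1 x.2)%:E)) /=; last first.
    by move=> x; rewrite lee_fin.
  rewrite -esum_sum; last by move=> *; rewrite lee_fin.
  by apply: eq_esum => u _; rewrite sumEFin.
by rewrite sumEFin sumr_const.
Qed.

Lemma prob_ge0 A : 0 <= prob p A.
Proof. by apply: esum_ge0 => x _; rewrite lee_fin. Qed.

Lemma condH_on_ge0 A : A `<=` supp p -> 0 <= condH_on A.
Proof.
by move=> As; apply: esum_ge0 => x /As px; rewrite lee_fin mulr_ge0 ?hcond_ge0 ?ltW.
Qed.

Lemma prob_supp : prob p (supp p) = 1.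
Proof.
case: pmf => _ <-; rewrite /prob (esumID (supp p) [set: Y * U]); last first.
  by move=> *; rewrite lee_fin.
rewrite setTI [X in _ = _ + X]esum1 ?adde0 // => x [_ /negP].
by rewrite -leNgt => px; apply/eqP; rewrite eq_le !lee_fin px p_ge0.
Qed.

Lemma prob_le1 {A} : A `<=` supp p -> prob p A <= 1.
Proof.
by move=> As; rewrite -prob_supp le_esum_subset // => x _; rewrite lee_fin.
Qed.

Lemma fin_num_prob {A} : A `<=` supp p -> prob p A \is a fin_num.
Proof.
by move=> As; rewrite ge0_fin_numE ?prob_ge0 // (le_lt_trans (prob_le1 As)) ?ltry.
Qed.

Lemma card_ge1 : (1 <= #|Y|%:R :> R)%R.
Proof.
rewrite -lee_fin -prob_supp -esum_marg.
apply: (@le_trans _ _ (\esum_(x in supp p) (marg p x.2)%:E)).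
  by apply: le_esum => x _; rewrite lee_fin pmf_le_marg.
by apply: le_esum_subset => // x _; rewrite lee_fin.
Qed.

Lemma condH_on_gibbs {A} (a : R) : A `<=` supp p -> (1 <= a)%R ->
  (ln 2)%:E * condH_on A + prob p A <= (ln a)%:E * prob p A + (#|Y|%:R / a)%:E.
Proof.
move=> As a1; have a0 : (0 < a)%R by apply: lt_le_trans a1.
have l2 : (0 <= ln (2 : R))%R by rewrite ln_ge0 //; lra.
have ph0 x : A x -> (0 <= p x.1 x.2 * hcond p x.1 x.2)%R.
  by move=> /As px; rewrite mulr_ge0 ?hcond_ge0.
have la : (0 <= ln a)%R by rewrite ln_ge0.
have ai : (0 <= a^-1)%R by rewrite invr_ge0 ltW.
rewrite /condH_on /prob -esumZl // -esumD //; last 2 first.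
- by move=> x /ph0 ?; rewrite -EFinM lee_fin mulr_ge0.
- by move=> x _; rewrite lee_fin.
apply: (@le_trans _ _ (\esum_(x in A)
    ((ln a)%:E * (p x.1 x.2)%:E + (a^-1)%:E * (marg p x.2)%:E))).
  apply: le_esum => x /As px; rewrite -!EFinM -!EFinD lee_fin.
  have -> : (ln 2 * (p x.1 x.2 * hcond p x.1 x.2) =
            p x.1 x.2 * ln (marg p x.2 / p x.1 x.2))%R.
    by rewrite hcondE //; field; rewrite gt_eqF // ln_gt0 //; lra.
  rewrite (mulrC (ln a)) (mulrC a^-1)%R.
  exact: mul_ln_div_le px (lt_le_trans px (pmf_le_marg _ _)) a0.
rewrite esumD; last 2 first.
- by move=> x _; rewrite -EFinM lee_fin mulr_ge0.
- by move=> x _; rewrite -EFinM lee_fin mulr_ge0.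
rewrite !esumZl //; [|by move=> *; rewrite lee_fin..].
rewrite leeD2l // mulrC EFinM lee_wpmul2l ?lee_fin // -esum_marg.
by apply: le_esum_subset => // x _; rewrite lee_fin.
Qed.

Lemma fin_num_condH_on {A} : A `<=` supp p -> condH_on A \is a fin_num.
Proof.
move=> As; rewrite ge0_fin_numE ?condH_on_ge0 //.
have := condH_on_gibbs As (lexx 1).
rewrite ln1 mul0e add0e -(fineK (fin_num_prob As)).
case: (condH_on A) => [r _|/=|//]; first exact: ltry.
by rewrite gt0_muley ?lte_fin ?ln_gt0 ?addye // ?leNgt ?ltry //; lra.
Qed.

Lemma fine_condH_on_gibbs {A} (a : R) : A `<=` supp p -> (1 <= a)%R ->
  (ln 2 * fine (condH_on A) + fine (prob p A) <=
   ln a * fine (prob p A) + #|Y|%:R / a)%R.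
Proof.
move=> As a1; rewrite -lee_fin !EFinD !EFinM.
by rewrite !fineK ?fin_num_prob ?fin_num_condH_on ?condH_on_gibbs.
Qed.

Lemma fine_condH_on_le {A} (k : R) : A `<=` supp p -> (0 <= k)%R ->
  (forall x, A x -> hcond p x.1 x.2 <= k)%R ->
  (fine (condH_on A) <= k * fine (prob p A))%R.
Proof.
move=> As k0 hk; rewrite -lee_fin EFinM !fineK ?fin_num_prob ?fin_num_condH_on //.
rewrite /condH_on /prob -esumZl //; last by move=> *; rewrite lee_fin.
by apply: le_esum => x Ax; rewrite -EFinM lee_fin [(k * _)%R]mulrC ler_wpM2l ?hk.
Qed.

Lemma fine_condH_on_ge {A} (k : R) : A `<=` supp p -> (0 <= k)%R ->
  (forall x, A x -> k <= hcond p x.1 x.2)%R ->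
  (k * fine (prob p A) <= fine (condH_on A))%R.
Proof.
move=> As k0 hk; rewrite -lee_fin EFinM !fineK ?fin_num_prob ?fin_num_condH_on //.
rewrite /condH_on /prob -esumZl //; last by move=> *; rewrite lee_fin.
by apply: le_esum => x Ax; rewrite -EFinM lee_fin [(k * _)%R]mulrC ler_wpM2l ?hk.
Qed.

Lemma condH_split T : condH p =
  (fine (condH_on (supp p `&` T)) + fine (condH_on (supp p `&` ~` T)))%:E.
Proof.
rewrite EFinD !fineK ?fin_num_condH_on //; [|by move=> x []..].
rewrite /condH (esumID T) // => x px.
by rewrite lee_fin mulr_ge0 ?hcond_ge0 ?ltW.
Qed.

Lemma prob_split T :
  (fine (prob p (supp p `&` T)) + fine (prob p (supp p `&` ~` T)) = 1)%R.
Proof.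
apply: EFin_inj; rewrite EFinD !fineK ?fin_num_prob //; [|by move=> x []..].
by rewrite -prob_supp /prob (esumID T (supp p)) // => x _; rewrite lee_fin.
Qed.
End JointPmf.

Theorem lemma8 (R : realType) (Y : finType) (U : countType)
  (p : Y -> U -> R) (mu eps c : R) :
  is_joint_pmf p ->
  0 < mu -> mu < 1 / 2 -> 0 < eps -> 0 < c ->
  (prob p [set x | supp p x /\ (eps < `|hcond p x.1 x.2 - c|)%R] < mu%:E)%E ->
  (`|condH p - c%:E| < (eps + mu * log2 (#|Y|%:R / mu ^+ 2))%:E)%E.
Proof.
move=> pmf mu0 mu12 eps0 c0 atypical_lt_mu.
pose T := [set x : Y * U | eps < `|hcond p x.1 x.2 - c|].
have BS : supp p `&` T `<=` supp p by move=> x [].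
have GS : supp p `&` ~` T `<=` supp p by move=> x [].
have typical x : (supp p `&` ~` T) x -> c - eps <= hcond p x.1 x.2 <= c + eps.
  by move=> [_ /negP]; rewrite -leNgt ler_distl.
have n1 := card_ge1 pmf.
rewrite (condH_split pmf T) abse_EFin lte_fin.
pose qB := fine (prob p (supp p `&` T)); pose qG := fine (prob p (supp p `&` ~` T)).
have qB0 : 0 <= qB := fine_ge0 (prob_ge0 pmf _).
have qBmu : qB < mu by rewrite -lte_fin fineK ?(fin_num_prob pmf BS).
have qBG : qB + qG = 1 := prob_split pmf T.
apply: (abs_split_sub_lt (qB := qB) (qG := qG)) => //.
- exact/fine_ge0/(condH_on_ge0 pmf BS).
- apply: (atypical_entropy_lt n1 mu0 mu12 qB0 qBmu).
  by apply: fine_condH_on_gibbs; rewrite // ler_pdivlMr // mul1r; lra.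
- exact/fine_ge0/(condH_on_ge0 pmf GS).
- apply: fine_condH_on_le => // [|x /typical /andP[]//]; lra.
move=> ec; have hG_ge : (c - eps) * qG <= fine (condH_on p (supp p `&` ~` T)).
  by apply: fine_condH_on_ge => // [|x /typical /andP[]//]; rewrite subr_ge0.
split=> //; apply: le_trans (ltW (log2_div_sqr_gt n1 mu0 mu12)).
apply: (threshold_le_log2 n1 _ hG_ge); first lra.
by apply: fine_condH_on_gibbs => //; lra.
Qed.
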